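(* Let $\mathcal H$ be a Hilbert space and $\mathcal S,\mathcal A\subseteq\mathcal H$ closed subspaces with $\mathcal S,\mathcal A,\mathcal S^\perp,\mathcal A^\perp$ nonzero and $\mathcal A\oplus\mathcal S^\perp=\mathcal H$. Fix $\lambda\in[0,1]$, let $B:=\lambda P_{\mathcal A\mathcal S^\perp}+(1-\lambda)P_{\mathcal S}$ and $\mathcal B:=\mathcal R(B)$. Then $$\frac{1}{1+\lambda^2\frac{\sin^2(\mathcal A,\mathcal S)}{\cos^2(\mathcal A,\mathcal S)}}\le\cos^2(\mathcal B,\mathcal S)\le\frac{1}{1+\lambda^2\frac{\cos^2(\mathcal A,\mathcal S^\perp)}{\sin^2(\mathcal A,\mathcal S^\perp)}}.$$ In particular $\cos(\mathcal B,\mathcal S)\ge\cos(\mathcal A,\mathcal S)$.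
   Context: $P_{\mathcal V}$ is the orthogonal projection onto a closed subspace $\mathcal V$, $\mathcal V^\perp$ its orthogonal complement, $\mathcal R(\cdot)$ the range. For closed subspaces with $\mathcal V_1\oplus\mathcal V_2=\mathcal H$, $P_{\mathcal V_1\mathcal V_2}$ is the oblique projection onto $\mathcal V_1$ along $\mathcal V_2$ (identity on $\mathcal V_1$, zero on $\mathcal V_2$). Angles between nonzero closed subspaces: $\cos(\mathcal V_1,\mathcal V_2):=\inf_{0\ne x\in\mathcal V_1}\|P_{\mathcal V_2}x\|/\|x\|$, $\sin(\mathcal V_1,\mathcal V_2):=\sup_{0\ne x\in\mathcal V_1}\|P_{\mathcal V_2^\perp}x\|/\|x\|$. *)

From Stdlib Require Import Reals ClassicalEpsilon.
Open Scope R_scope.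

Record Hilbert := {
  hcar :> Type;
  hzero : hcar;
  hadd : hcar -> hcar -> hcar;
  hopp : hcar -> hcar;
  hscal : R -> hcar -> hcar;
  hinner : hcar -> hcar -> R;
  haddA : forall x y z, hadd x (hadd y z) = hadd (hadd x y) z;
  haddC : forall x y, hadd x y = hadd y x;
  hadd0 : forall x, hadd hzero x = x;
  haddN : forall x, hadd x (hopp x) = hzero;
  hscalA : forall a b x, hscal a (hscal b x) = hscal (a * b) x;
  hscal1 : forall x, hscal 1 x = x;
  hscalDr : forall a x y, hscal a (hadd x y) = hadd (hscal a x) (hscal a y);
  hscalDl : forall a b x, hscal (a + b) x = hadd (hscal a x) (hscal b x);
  hinner_sym : forall x y, hinner x y = hinner y x;
  hinner_addl : forall x y z, hinner (hadd x y) z = hinner x z + hinner y z;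
  hinner_scall : forall a x y, hinner (hscal a x) y = a * hinner x y;
  hinner_pos : forall x, 0 <= hinner x x;
  hinner_def : forall x, hinner x x = 0 -> x = hzero;
  hcomplete : forall u : nat -> hcar,
    (forall eps, eps > 0 -> exists N : nat, forall m n : nat, (N <= m)%nat -> (N <= n)%nat ->
        sqrt (hinner (hadd (u m) (hopp (u n))) (hadd (u m) (hopp (u n)))) < eps) ->
    exists l, forall eps, eps > 0 -> exists N : nat, forall n : nat, (N <= n)%nat ->
        sqrt (hinner (hadd (u n) (hopp l)) (hadd (u n) (hopp l))) < eps
}.

Arguments hzero {h}.
Arguments hadd {h}.
Arguments hopp {h}.
Arguments hscal {h}.
Arguments hinner {h}.

Section Ops.
Variable H : Hilbert.

Definition hsub (x y : H) : H := hadd x (hopp y).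
Definition hnorm (x : H) : R := sqrt (hinner x x).

Definition converges (u : nat -> H) (l : H) : Prop :=
  forall eps, eps > 0 -> exists N : nat, forall n : nat, (N <= n)%nat -> hnorm (hsub (u n) l) < eps.

Definition closed_subspace (V : H -> Prop) : Prop :=
  V hzero /\ (forall x y, V x -> V y -> V (hadd x y)) /\
  (forall (a : R) x, V x -> V (hscal a x)) /\
  (forall u l, (forall n, V (u n)) -> converges u l -> V l).

Definition nonzero_sub (V : H -> Prop) : Prop := exists x, V x /\ x <> hzero.

Definition perp (V : H -> Prop) : H -> Prop := fun x => forall y, V y -> hinner x y = 0.

Definition direct_sum_full (V1 V2 : H -> Prop) : Prop :=
  (forall x, exists v1 v2, V1 v1 /\ V2 v2 /\ x = hadd v1 v2) /\
  (forall x, V1 x -> V2 x -> x = hzero).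

Definition proj (V : H -> Prop) (x : H) : H :=
  epsilon (inhabits hzero) (fun y => V y /\ perp V (hsub x y)).

Definition oproj (V1 V2 : H -> Prop) (x : H) : H :=
  epsilon (inhabits hzero) (fun y => V1 y /\ V2 (hsub x y)).

Definition range (T : H -> H) : H -> Prop := fun y => exists x, y = T x.
End Ops.

Arguments hsub {H}.
Arguments hnorm {H}.
Arguments converges {H}.
Arguments closed_subspace {H}.
Arguments nonzero_sub {H}.
Arguments perp {H}.
Arguments direct_sum_full {H}.
Arguments proj {H}.
Arguments oproj {H}.
Arguments range {H}.

Definition is_glb (E : R -> Prop) (m : R) : Prop :=
  (forall x, E x -> m <= x) /\ (forall b, (forall x, E x -> b <= x) -> b <= m).
Definition Rinf (E : R -> Prop) : R := epsilon (inhabits 0) (is_glb E).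
Definition Rsup (E : R -> Prop) : R := epsilon (inhabits 0) (is_lub E).

Definition cos_ang {H : Hilbert} (V1 V2 : H -> Prop) : R :=
  Rinf (fun r => exists x, V1 x /\ x <> hzero /\ r = hnorm (proj V2 x) / hnorm x).
Definition sin_ang {H : Hilbert} (V1 V2 : H -> Prop) : R :=
  Rsup (fun r => exists x, V1 x /\ x <> hzero /\ r = hnorm (proj (perp V2) x) / hnorm x).

(* Write Q for the oblique projection onto A along S^perp. Since B x = p + lam q where
   p = P_S (Q x) and q = Q x - p, the range of B is { P_S a + lam (a - P_S a) : a in A },
   and for such a vector cos^2 = 1 / (1 + lam^2 t^2) with t = |a - P_S a| / |P_S a|.
   Bounding t from above by sin(A,S)/cos(A,S) and from below by
   cos(A,S^perp)/sin(A,S^perp) gives the two inequalities; comparing with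
   |P_S a|^2 / |a|^2 = 1 / (1 + t^2) gives cos(B,S) >= cos(A,S) when lam <= 1.
   The lower bound needs cos(A,S) > 0, i.e. that P_S restricted to A, a continuous
   bijection onto S, is bounded below: this is the open mapping theorem, obtained from
   the Baire category theorem by successive approximation. *)

From Stdlib Require Import Reals Lra Psatz ClassicalEpsilon Classical.
Open Scope R_scope.

Lemma dependent_choice {X : Type} (x0 : X) (P : nat -> X -> Prop) (step : nat -> X -> X -> Prop) :
  P 0%nat x0 -> (forall n x, P n x -> exists y, step n x y /\ P (S n) y) ->
  exists u : nat -> X, u 0%nat = x0 /\ forall n, P n (u n) /\ step n (u n) (u (S n)).
Proof.
  intros P0 next.
  set (f n x := epsilon (inhabits x0) (fun y => step n x y /\ P (S n) y)).
  assert (f_spec : forall n x, P n x -> step n x (f n x) /\ P (S n) (f n x)).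
  { intros n x Px. apply epsilon_spec, next, Px. }
  set (u := nat_rect (fun _ => X) x0 f).
  assert (Pu : forall n, P n (u n)).
  { induction n as [|n IH]; [exact P0 | apply (f_spec n _ IH)]. }
  exists u. split; [reflexivity|]. intro n. split; [apply Pu | apply (f_spec n _ (Pu n))].
Qed.

Lemma pow_half_vanishes C eps : eps > 0 -> exists k, C * (/ 2) ^ k < eps.
Proof.
  intro Heps. destruct (pow_lt_1_zero (/ 2)) with (y := eps / (Rabs C + 1)) as [k Hk].
  - rewrite Rabs_right; lra.
  - apply Rdiv_lt_0_compat; [lra | pose proof (Rabs_pos C); lra].
  - exists k. specialize (Hk k (le_n k)).
    rewrite Rabs_right in Hk by (apply Rle_ge, pow_le; lra).
    pose proof (Rabs_pos C). pose proof (pow_le (/ 2) k ltac:(lra)).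
    apply Rle_lt_trans with (Rabs C * (/ 2) ^ k).
    + apply Rmult_le_compat_r; [lra | apply Rle_abs].
    + apply Rle_lt_trans with ((Rabs C + 1) * (/ 2) ^ k); [nra|].
      apply Rmult_lt_reg_l with (/ (Rabs C + 1)); [apply Rinv_0_lt_compat; lra|].
      rewrite <- Rmult_assoc, Rinv_l by lra. unfold Rdiv in Hk. lra.
Qed.

Lemma pow_half_antitone k n : (k <= n)%nat -> (/ 2) ^ n <= (/ 2) ^ k.
Proof. induction 1 as [|n _ IH]; [lra|]. simpl. pose proof (pow_le (/ 2) n). lra. Qed.

Lemma Rinf_glb (E : R -> Prop) :
  (exists x, E x) -> (exists m, forall x, E x -> m <= x) -> is_glb E (Rinf E).
Proof.
  intros [x0 Ex0] [m Hm]. unfold Rinf. apply epsilon_spec.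
  destruct (completeness (fun r => E (- r))) as [M [HM1 HM2]].
  - exists (- m). intros r Er. specialize (Hm _ Er). lra.
  - exists (- x0). rewrite Ropp_involutive. exact Ex0.
  - exists (- M). split.
    + intros x Ex. assert (- x <= M) by (apply HM1; rewrite Ropp_involutive; exact Ex). lra.
    + intros b Hb. assert (M <= - b); [|lra]. apply HM2. intros r Er. specialize (Hb _ Er). lra.
Qed.

Lemma Rsup_lub (E : R -> Prop) :
  (exists x, E x) -> (exists m, forall x, E x -> x <= m) -> is_lub E (Rsup E).
Proof.
  intros Hne [m Hm]. unfold Rsup. apply epsilon_spec.
  destruct (completeness E) as [M HM]; [exists m; exact Hm | exact Hne | exists M; exact HM].
Qed.

Lemma inv_one_plus_sqr_antitone l x y :
  0 <= x <= y -> 1 / (1 + l ^ 2 * y ^ 2) <= 1 / (1 + l ^ 2 * x ^ 2).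
Proof.
  intro Hxy. assert (x ^ 2 <= y ^ 2) by nra. assert (0 <= l ^ 2) by nra.
  unfold Rdiv. rewrite !Rmult_1_l. apply Rinv_le_contravar; nra.
Qed.

Lemma div_le_div_of_bounds c s x y : 0 < c <= x -> 0 <= y <= s -> y / x <= s / c.
Proof.
  intros Hx Hy. unfold Rdiv.
  apply Rmult_le_compat; [lra | left; apply Rinv_0_lt_compat; lra | lra |].
  apply Rinv_le_contravar; lra.
Qed.

Lemma sqrt_le_of_le_sqr L e : 0 <= e -> L <= e ^ 2 -> sqrt L <= e.
Proof. intros He HL. rewrite <- (sqrt_pow2 e He). apply sqrt_le_1_alt, HL. Qed.

Section Hilbert.
Context {H : Hilbert}.
Implicit Types x y z u v w : H.

Lemma inner_sym x y : hinner x y = hinner y x.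
Proof. exact (hinner_sym H x y). Qed.
Lemma inner_addl x y z : hinner (hadd x y) z = hinner x z + hinner y z.
Proof. exact (hinner_addl H x y z). Qed.
Lemma inner_scall a x y : hinner (hscal a x) y = a * hinner x y.
Proof. exact (hinner_scall H a x y). Qed.
Lemma inner_addr x y z : hinner z (hadd x y) = hinner z x + hinner z y.
Proof. rewrite !(inner_sym z). apply inner_addl. Qed.
Lemma inner_scalr a x y : hinner y (hscal a x) = a * hinner y x.
Proof. rewrite !(inner_sym y). apply inner_scall. Qed.
Lemma inner_0l z : hinner (@hzero H) z = 0.
Proof. pose proof (inner_addl hzero hzero z) as E. rewrite (hadd0 H) in E. lra. Qed.
Lemma inner_0r z : hinner z (@hzero H) = 0.
Proof. rewrite inner_sym. apply inner_0l. Qed.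
Lemma inner_oppl x z : hinner (hopp x) z = - hinner x z.
Proof. pose proof (inner_addl x (hopp x) z) as E. rewrite (haddN H), inner_0l in E. lra. Qed.
Lemma inner_oppr x z : hinner z (hopp x) = - hinner z x.
Proof. rewrite !(inner_sym z). apply inner_oppl. Qed.
Lemma inner_subl x y z : hinner (hsub x y) z = hinner x z - hinner y z.
Proof. unfold hsub. rewrite inner_addl, inner_oppl. ring. Qed.
Lemma inner_subr x y z : hinner z (hsub x y) = hinner z x - hinner z y.
Proof. rewrite !(inner_sym z). apply inner_subl. Qed.

Lemma inner_ext u v : (forall w, hinner u w = hinner v w) -> u = v.
Proof.
  intros E. assert (Z : hsub u v = hzero).
  { apply (hinner_def H). rewrite inner_subl, !E. ring. }
  unfold hsub in Z.
  rewrite <- (hadd0 H v), <- Z, <- (haddA H), (haddC H (hopp v)), (haddN H), (haddC H), (hadd0 H).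
  reflexivity.
Qed.

Ltac inner_simpl := repeat first
  [ rewrite inner_addl | rewrite inner_addr | rewrite inner_scall | rewrite inner_scalr
  | rewrite inner_oppl | rewrite inner_oppr | rewrite inner_subl | rewrite inner_subr
  | rewrite inner_0l | rewrite inner_0r ].

Ltac vec_eq := apply inner_ext; intro; inner_simpl; ring.

Lemma hsub_self x : hsub x x = hzero.
Proof. vec_eq. Qed.
Lemma hsub0 x : hsub x hzero = x.
Proof. vec_eq. Qed.
Lemma hsub_eq0 x y : hsub x y = hzero -> x = y.
Proof.
  intro E. apply inner_ext. intro w.
  assert (Z : hinner (hsub x y) w = 0) by (rewrite E; apply inner_0l).
  rewrite inner_subl in Z. lra.
Qed.

Lemma inner_self_ge0 x : 0 <= hinner x x.
Proof. exact (hinner_pos H x). Qed.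

Lemma hnorm_ge0 x : 0 <= hnorm x.
Proof. apply sqrt_pos. Qed.
Lemma hnorm_sqr x : hnorm x * hnorm x = hinner x x.
Proof. apply sqrt_sqrt, inner_self_ge0. Qed.
Lemma hnorm_eq0 x : hnorm x = 0 -> x = hzero.
Proof. intro E. apply (hinner_def H). rewrite <- hnorm_sqr, E. ring. Qed.
Lemma hnorm0 : hnorm (@hzero H) = 0.
Proof. unfold hnorm. rewrite inner_0l. apply sqrt_0. Qed.
Lemma hnorm_gt0 x : x <> hzero -> 0 < hnorm x.
Proof.
  intro Nx. destruct (hnorm_ge0 x) as [Hx|Hx]; [exact Hx|].
  exfalso. apply Nx, hnorm_eq0. auto.
Qed.
Lemma hnorm_scal a x : hnorm (hscal a x) = Rabs a * hnorm x.
Proof.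
  unfold hnorm. rewrite inner_scall, inner_scalr, <- Rmult_assoc.
  rewrite sqrt_mult by (nra || apply inner_self_ge0).
  fold (Rsqr a). rewrite sqrt_Rsqr_abs. reflexivity.
Qed.
Lemma hnorm_sub_sym x y : hnorm (hsub x y) = hnorm (hsub y x).
Proof.
  replace (hsub x y) with (hscal (-1) (hsub y x)) by vec_eq.
  rewrite hnorm_scal, Rabs_left by lra. ring.
Qed.

Lemma Rle_of_sqr_le a b : 0 <= b -> a * a <= b * b -> a <= b.
Proof. intros. nra. Qed.

Lemma inner_le_hnorm x y : hinner x y <= hnorm x * hnorm y.
Proof.
  apply Rle_of_sqr_le; [apply Rmult_le_pos; apply hnorm_ge0|].
  replace (hnorm x * hnorm y * (hnorm x * hnorm y))
    with (hnorm x * hnorm x * (hnorm y * hnorm y)) by ring.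
  rewrite !hnorm_sqr.
  destruct (inner_self_ge0 y) as [Hy|Hy].
  - pose proof (inner_self_ge0 (hsub (hscal (hinner y y) x) (hscal (hinner x y) y))) as P.
    revert P. inner_simpl. rewrite (inner_sym y x). intro. nra.
  - symmetry in Hy. apply (hinner_def H) in Hy. subst. rewrite !inner_0r. nra.
Qed.

Lemma Rabs_inner_le x y : Rabs (hinner x y) <= hnorm x * hnorm y.
Proof.
  apply Rabs_le. split; [|apply inner_le_hnorm].
  pose proof (inner_le_hnorm (hscal (-1) x) y) as B.
  rewrite inner_scall, hnorm_scal, Rabs_left in B by lra. lra.
Qed.

Lemma hnorm_add_le x y : hnorm (hadd x y) <= hnorm x + hnorm y.
Proof.
  apply Rle_of_sqr_le; [pose proof (hnorm_ge0 x); pose proof (hnorm_ge0 y); lra|].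
  rewrite hnorm_sqr. inner_simpl. rewrite (inner_sym y x).
  pose proof (inner_le_hnorm x y). pose proof (hnorm_sqr x). pose proof (hnorm_sqr y). nra.
Qed.

Lemma hnorm_sub_le x y : hnorm (hsub x y) <= hnorm x + hnorm y.
Proof.
  replace (hsub x y) with (hadd x (hscal (-1) y)) by vec_eq.
  eapply Rle_trans; [apply hnorm_add_le|].
  rewrite hnorm_scal, Rabs_left by lra. lra.
Qed.

Lemma hnorm_sub_triangle x y z : hnorm (hsub x z) <= hnorm (hsub x y) + hnorm (hsub y z).
Proof. replace (hsub x z) with (hadd (hsub x y) (hsub y z)) by vec_eq. apply hnorm_add_le. Qed.

Lemma cauchy_converges (u : nat -> H) :
  (forall eps, eps > 0 -> exists N : nat, forall m n : nat, (N <= m)%nat -> (N <= n)%nat ->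
     hnorm (hsub (u m) (u n)) < eps) -> exists l, converges u l.
Proof. exact (hcomplete H u). Qed.

Lemma converges_sub_r (u : nat -> H) l x :
  converges u l -> converges (fun n => hsub (u n) x) (hsub l x).
Proof.
  intros Hu eps Heps. destruct (Hu eps Heps) as [N HN]. exists N. intros n Hn.
  replace (hsub (hsub (u n) x) (hsub l x)) with (hsub (u n) l) by vec_eq. auto.
Qed.

Lemma converges_sub_l (u : nat -> H) l x :
  converges u l -> converges (fun n => hsub x (u n)) (hsub x l).
Proof.
  intros Hu eps Heps. destruct (Hu eps Heps) as [N HN]. exists N. intros n Hn.
  replace (hsub (hsub x (u n)) (hsub x l)) with (hsub l (u n)) by vec_eq.
  rewrite hnorm_sub_sym. auto.
Qed.

Lemma hnorm_limit_le (u : nat -> H) l c : converges u l ->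
  (forall eps, eps > 0 -> exists N : nat, forall n, (N <= n)%nat -> hnorm (u n) <= c + eps) ->
  hnorm l <= c.
Proof.
  intros Hu Hc. apply Rle_plus_epsilon. intros eps Heps.
  destruct (Hu (eps / 2)) as [N1 HN1]; [lra|]. destruct (Hc (eps / 2)) as [N2 HN2]; [lra|].
  set (n := Nat.max N1 N2).
  specialize (HN1 n (Nat.le_max_l _ _)). specialize (HN2 n (Nat.le_max_r _ _)).
  replace l with (hadd (u n) (hsub l (u n))) by vec_eq.
  pose proof (hnorm_add_le (u n) (hsub l (u n))). rewrite (hnorm_sub_sym l) in *. lra.
Qed.

Lemma converges_of_telescoping (u : nat -> H) (e : nat -> R) :
  (forall k, hnorm (hsub (u (S k)) (u k)) + e (S k) <= e k) ->
  (forall k, 0 <= e k) -> (forall eps, eps > 0 -> exists k, e k < eps) ->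
  exists l, converges u l /\ forall k, hnorm (hsub l (u k)) <= e k.
Proof.
  intros Hstep He Hvan.
  assert (Hdist : forall k m, (k <= m)%nat -> hnorm (hsub (u m) (u k)) + e m <= e k).
  { intros k m Hkm. induction Hkm as [|m _ IH].
    - rewrite hsub_self, hnorm0. lra.
    - pose proof (hnorm_sub_triangle (u (S m)) (u m) (u k)). specialize (Hstep m). lra. }
  destruct (cauchy_converges u) as [l Hl].
  { intros eps Heps. destruct (Hvan (eps / 2)) as [N HN]; [lra|]. exists N. intros m n Hm Hn.
    pose proof (hnorm_sub_triangle (u m) (u N) (u n)).
    pose proof (Hdist N m Hm). pose proof (Hdist N n Hn). pose proof (He m). pose proof (He n).
    rewrite (hnorm_sub_sym (u N)) in *. lra. }
  exists l. split; [exact Hl|]. intro k.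
  apply (hnorm_limit_le (fun m => hsub (u m) (u k))); [apply converges_sub_r, Hl|].
  intros eps Heps. exists k. intros m Hm. pose proof (Hdist k m Hm). pose proof (He m). lra.
Qed.

Section Subspaces.
Variable V : H -> Prop.
Hypothesis CV : closed_subspace V.

Lemma subspace0 : V hzero.
Proof. apply CV. Qed.
Lemma subspace_add x y : V x -> V y -> V (hadd x y).
Proof. apply CV. Qed.
Lemma subspace_scal a x : V x -> V (hscal a x).
Proof. apply CV. Qed.
Lemma subspace_sub x y : V x -> V y -> V (hsub x y).
Proof.
  intros Vx Vy. replace (hsub x y) with (hadd x (hscal (-1) y)) by vec_eq.
  apply subspace_add, subspace_scal; assumption.
Qed.
Lemma subspace_limit (u : nat -> H) l : (forall n, V (u n)) -> converges u l -> V l.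
Proof. apply CV. Qed.
End Subspaces.

Lemma perp_closed_subspace (V : H -> Prop) : closed_subspace (perp V).
Proof.
  unfold perp. repeat split.
  - intros y _. apply inner_0l.
  - intros x y Hx Hy z Vz. rewrite inner_addl, Hx, Hy by exact Vz. ring.
  - intros a x Hx z Vz. rewrite inner_scall, Hx by exact Vz. ring.
  - intros u l Hu Hl z Vz.
    enough (Rabs (hinner l z) <= 0) by (unfold Rabs in *; destruct Rcase_abs; lra).
    apply Rle_plus_epsilon. intros eps Heps.
    destruct (Hl (eps / (hnorm z + 1))) as [N HN].
    { pose proof (hnorm_ge0 z). apply Rdiv_lt_0_compat; lra. }
    specialize (HN N (le_n N)).
    replace (hinner l z) with (- hinner (hsub (u N) l) z)
      by (rewrite inner_subl, Hu by exact Vz; ring).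
    rewrite Rabs_Ropp. pose proof (Rabs_inner_le (hsub (u N) l) z). pose proof (hnorm_ge0 z).
    assert (hnorm (hsub (u N) l) * hnorm z <= eps / (hnorm z + 1) * hnorm z) by nra.
    assert (eps / (hnorm z + 1) * hnorm z <= eps).
    { unfold Rdiv. rewrite Rmult_assoc. rewrite <- (Rmult_1_r eps) at 2.
      apply Rmult_le_compat_l; [lra|].
      apply Rmult_le_reg_l with (hnorm z + 1); [lra|].
      rewrite <- Rmult_assoc, Rinv_r by lra. lra. }
    lra.
Qed.

Lemma parallelogram_midpoint x v w :
  hinner (hsub v w) (hsub v w) =
  2 * hinner (hsub x v) (hsub x v) + 2 * hinner (hsub x w) (hsub x w)
  - 4 * hinner (hsub x (hscal (/ 2) (hadd v w))) (hsub x (hscal (/ 2) (hadd v w))).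
Proof. inner_simpl. rewrite (inner_sym w v), (inner_sym x v), (inner_sym x w). field. Qed.

Lemma closest_point_exists V x : closed_subspace V ->
  exists l, V l /\ forall v, V v -> hnorm (hsub x l) <= hnorm (hsub x v).
Proof.
  intro CV.
  set (D r := exists v, V v /\ r = hinner (hsub x v) (hsub x v)).
  assert (Gd : is_glb D (Rinf D)).
  { apply Rinf_glb.
    - exists (hinner (hsub x hzero) (hsub x hzero)), hzero.
      split; [apply subspace0, CV | reflexivity].
    - exists 0. intros r [v [_ ->]]. apply inner_self_ge0. }
  set (d := Rinf D) in *.
  assert (Hd : forall v, V v -> d <= hinner (hsub x v) (hsub x v)).
  { intros v Vv. apply Gd. exists v. auto. }
  assert (d_ge0 : 0 <= d) by (apply Gd; intros r [v [_ ->]]; apply inner_self_ge0).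
  destruct (choice (fun n v => V v /\ hinner (hsub x v) (hsub x v) < d + (/ 2) ^ n)) as [v Hv].
  { intro n. apply NNPP. intro Nv.
    assert (d + (/ 2) ^ n <= d); [|pose proof (pow_lt (/ 2) n ltac:(lra)); lra].
    apply Gd. intros r [w [Vw ->]]. apply Rnot_lt_le. intro Hw. apply Nv. exists w. auto. }
  destruct (cauchy_converges v) as [l Hl].
  { intros eps Heps. destruct (pow_half_vanishes 4 (eps * eps)) as [N HN]; [nra|].
    exists N. intros m n Hm Hn.
    destruct (Hv m) as [Vm Hvm]. destruct (Hv n) as [Vn Hvn].
    pose proof (Hd _ (subspace_scal V CV (/ 2) _ (subspace_add V CV _ _ Vm Vn))).
    pose proof (parallelogram_midpoint x (v m) (v n)) as P. rewrite <- hnorm_sqr in P.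
    pose proof (pow_half_antitone N m Hm). pose proof (pow_half_antitone N n Hn).
    pose proof (hnorm_ge0 (hsub (v m) (v n))). nra. }
  assert (Hxl : hnorm (hsub x l) <= sqrt d).
  { apply (hnorm_limit_le (fun n => hsub x (v n))); [apply converges_sub_l, Hl|].
    intros eps Heps. destruct (pow_half_vanishes 1 (eps * eps)) as [N HN]; [nra|].
    exists N. intros n Hn. pose proof (sqrt_pos d).
    apply Rle_of_sqr_le; [lra|]. rewrite hnorm_sqr.
    destruct (Hv n) as [_ Hvn]. pose proof (pow_half_antitone N n Hn).
    pose proof (sqrt_sqrt d d_ge0).
    nra. }
  exists l. split; [apply (subspace_limit V CV v l); [intro n; apply Hv | exact Hl]|].
  intros w Vw. apply Rle_trans with (sqrt d); [exact Hxl|].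
  rewrite <- (sqrt_Rsqr (hnorm (hsub x w))) by apply hnorm_ge0.
  apply sqrt_le_1_alt. unfold Rsqr. rewrite hnorm_sqr. apply Hd, Vw.
Qed.

Lemma closest_point_perp V x l : closed_subspace V -> V l ->
  (forall v, V v -> hnorm (hsub x l) <= hnorm (hsub x v)) -> perp V (hsub x l).
Proof.
  intros CV Vl Hmin w Vw. set (a := hsub x l) in *.
  set (c := hinner a w). set (t := c / (hinner w w + 1)).
  pose proof (inner_self_ge0 w).
  assert (Ht : t * (hinner w w + 1) = c) by (unfold t; field; lra).
  pose proof (Hmin _ (subspace_add V CV _ _ Vl (subspace_scal V CV t _ Vw))) as Hle.
  replace (hsub x (hadd l (hscal t w))) with (hsub a (hscal t w)) in Hle by (unfold a; vec_eq).
  assert (Hsq : hinner a a <= hinner (hsub a (hscal t w)) (hsub a (hscal t w))).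
  { rewrite <- !hnorm_sqr. pose proof (hnorm_ge0 a). nra. }
  revert Hsq. inner_simpl. rewrite (inner_sym w a). fold c. intro Hsq.
  assert (c * c <= 0) by nra. nra.
Qed.

Lemma proj_spec V x : closed_subspace V -> V (proj V x) /\ perp V (hsub x (proj V x)).
Proof.
  intro CV. unfold proj. apply epsilon_spec.
  destruct (closest_point_exists V x CV) as [l [Vl Hl]].
  exists l. split; [exact Vl | apply closest_point_perp; assumption].
Qed.

Lemma proj_unique V x y : closed_subspace V -> V y -> perp V (hsub x y) -> proj V x = y.
Proof.
  intros CV Vy Py. destruct (proj_spec V x CV) as [Vp Pp]. apply hsub_eq0, (hinner_def H).
  assert (Vd : V (hsub (proj V x) y)) by (apply subspace_sub; assumption).
  pose proof (Pp _ Vd) as E1. pose proof (Py _ Vd) as E2.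
  revert E1 E2. inner_simpl. intros. lra.
Qed.

Section Projection.
Variable V : H -> Prop.
Hypothesis CV : closed_subspace V.

Lemma proj_in x : V (proj V x).
Proof. apply proj_spec, CV. Qed.
Lemma proj_perp x : perp V (hsub x (proj V x)).
Proof. apply proj_spec, CV. Qed.

Lemma proj_add x y : proj V (hadd x y) = hadd (proj V x) (proj V y).
Proof.
  apply proj_unique; [exact CV | apply subspace_add; [exact CV | apply proj_in | apply proj_in]|].
  intros s Vs. pose proof (proj_perp x s Vs) as Ex. pose proof (proj_perp y s Vs) as Ey.
  revert Ex Ey. inner_simpl. lra.
Qed.

Lemma proj_scal a x : proj V (hscal a x) = hscal a (proj V x).
Proof.
  apply proj_unique; [exact CV | apply subspace_scal; [exact CV | apply proj_in]|].
  intros s Vs. pose proof (proj_perp x s Vs) as Ex. revert Ex. inner_simpl. intro. nra.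
Qed.

Lemma proj_sub x y : proj V (hsub x y) = hsub (proj V x) (proj V y).
Proof.
  replace (hsub x y) with (hadd x (hscal (-1) y)) by vec_eq.
  rewrite proj_add, proj_scal. vec_eq.
Qed.

Lemma proj_id x : V x -> proj V x = x.
Proof.
  intro Vx. apply proj_unique; [exact CV | exact Vx |].
  rewrite hsub_self. apply perp_closed_subspace.
Qed.

Lemma hnorm_pythagoras x :
  hinner x x = hinner (proj V x) (proj V x) + hinner (hsub x (proj V x)) (hsub x (proj V x)).
Proof.
  pose proof (proj_perp x _ (proj_in x)) as O. revert O. inner_simpl.
  rewrite (inner_sym x (proj V x)). lra.
Qed.

Lemma proj_hnorm_le x : hnorm (proj V x) <= hnorm x.
Proof.
  apply Rle_of_sqr_le; [apply hnorm_ge0|]. rewrite !hnorm_sqr, (hnorm_pythagoras x).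
  pose proof (inner_self_ge0 (hsub x (proj V x))). lra.
Qed.

Lemma proj_perp_eq x : proj (perp V) x = hsub x (proj V x).
Proof.
  apply proj_unique; [apply perp_closed_subspace | apply proj_perp |].
  replace (hsub x (hsub x (proj V x))) with (proj V x) by vec_eq.
  intros y Py. rewrite inner_sym. apply Py, proj_in.
Qed.

Lemma proj_perp_perp x : proj (perp (perp V)) x = proj V x.
Proof.
  apply proj_unique; [apply perp_closed_subspace | |].
  - intros y Py. rewrite inner_sym. apply Py, proj_in.
  - intros y Py. rewrite inner_sym. apply Py, proj_perp.
Qed.
End Projection.

Lemma baire_ball (W : H -> Prop) (F : nat -> H -> Prop) : closed_subspace W ->
  (forall w, W w -> exists n, F n w) ->
  exists n y r, W y /\ r > 0 /\ forall z, W z -> hnorm (hsub z y) < r ->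
    forall eps, eps > 0 -> exists w, F n w /\ hnorm (hsub w z) < eps.
Proof.
  (* Otherwise nested balls, the one of rank n+1 missing F n, shrink to a point of W
     lying in no F n. *)
  intros CW cover. apply NNPP. intro Nball.
  set (ball_ok n (p : H * R) := W (fst p) /\ 0 < snd p /\ snd p <= (/ 2) ^ n).
  set (nested n (p q : H * R) := hnorm (hsub (fst q) (fst p)) + snd q <= snd p /\
         forall w, hnorm (hsub w (fst q)) <= snd q -> ~ F n w).
  assert (shrink : forall n p, ball_ok n p -> exists q, nested n p q /\ ball_ok (S n) q).
  { intros n [y r] (Wy & r_pos & r_le). simpl in *. apply NNPP. intro Nq. apply Nball.
    exists n, y, r. split; [exact Wy | split; [lra|]].
    intros z Wz Hz eps Heps. apply NNPP. intro Nw.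
    set (rho := Rmin eps (r - hnorm (hsub z y))).
    assert (rho <= eps) by apply Rmin_l.
    assert (rho <= r - hnorm (hsub z y)) by apply Rmin_r.
    assert (0 < rho) by (apply Rmin_glb_lt; lra).
    apply Nq. exists (z, rho / 2). unfold nested, ball_ok. simpl.
    pose proof (hnorm_ge0 (hsub z y)). repeat split; try lra.
    - intros w Hw Fw. apply Nw. exists w. split; [exact Fw | lra].
    - exact Wz. }
  destruct (dependent_choice (hzero, 1) ball_ok nested) as [p [_ Hp]]; [|exact shrink|].
  { unfold ball_ok. simpl. split; [apply subspace0, CW | lra]. }
  destruct (converges_of_telescoping (fun k => fst (p k)) (fun k => snd (p k))) as [l [Hl Hlk]].
  - intro k. apply Hp.
  - intro k. left. apply Hp.
  - intros eps Heps. destruct (pow_half_vanishes 1 eps Heps) as [k Hk].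
    exists k. destruct (Hp k) as [(_ & _ & Hle) _]. lra.
  - destruct (cover l) as [n Fn].
    { apply (subspace_limit W CW (fun k => fst (p k)) l); [intro k; apply Hp | exact Hl]. }
    destruct (Hp n) as [_ [_ avoid]]. exact (avoid l (Hlk (S n)) Fn).
Qed.

Section ObliqueProjection.
Variables A W : H -> Prop.
Hypothesis CA : closed_subspace A.
Hypothesis CW : closed_subspace W.
Hypothesis DS : direct_sum_full A (perp W).

Lemma oproj_spec x : A (oproj A (perp W) x) /\ perp W (hsub x (oproj A (perp W) x)).
Proof.
  unfold oproj. apply epsilon_spec. destruct DS as [decomp _].
  destruct (decomp x) as (a & b & Aa & Pb & ->). exists a. split; [exact Aa|].
  replace (hsub (hadd a b) a) with b by vec_eq. exact Pb.
Qed.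

Lemma oproj_id a : A a -> oproj A (perp W) a = a.
Proof.
  intro Aa. destruct (oproj_spec a) as [AQ PQ]. symmetry. apply hsub_eq0, DS.
  - apply subspace_sub; assumption.
  - exact PQ.
Qed.

Lemma proj_oproj x : proj W (oproj A (perp W) x) = proj W x.
Proof.
  symmetry. apply proj_unique; [exact CW | apply proj_in, CW |].
  intros s Ws. destruct (oproj_spec x) as [_ PQ].
  pose proof (PQ s Ws) as E1. pose proof (proj_perp W CW (oproj A (perp W) x) s Ws) as E2.
  revert E1 E2. inner_simpl. intros. lra.
Qed.

Lemma proj_oproj_id w : W w -> proj W (oproj A (perp W) w) = w.
Proof. intro Ww. rewrite proj_oproj. apply proj_id; assumption. Qed.

Lemma proj_eq0_on a : A a -> proj W a = hzero -> a = hzero.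
Proof.
  intros Aa E. apply DS; [exact Aa|].
  pose proof (proj_perp W CW a) as Pa. rewrite E, hsub0 in Pa. exact Pa.
Qed.

Lemma proj_image_dense_ball : exists m r, 0 <= m /\ r > 0 /\
  forall z, W z -> hnorm z < r -> forall eps, eps > 0 ->
    exists a, A a /\ hnorm a <= m /\ hnorm (hsub (proj W a) z) < eps.
Proof.
  destruct (baire_ball W (fun n w => exists a, A a /\ hnorm a <= INR n /\ proj W a = w) CW)
    as (n & y & r & Wy & r_pos & Hball).
  { intros w Ww. destruct (INR_unbounded (hnorm (oproj A (perp W) w))) as [n Hn].
    exists n, (oproj A (perp W) w).
    split; [apply oproj_spec | split; [lra | apply proj_oproj_id, Ww]]. }
  exists (2 * INR n), r. split; [pose proof (pos_INR n); lra | split; [exact r_pos|]].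
  intros z Wz Hz eps Heps.
  destruct (Hball (hadd y z)) with (eps := eps / 2) as (w1 & (a1 & A1 & N1 & <-) & E1).
  { apply subspace_add; assumption. }
  { replace (hsub (hadd y z) y) with z by vec_eq. exact Hz. }
  { lra. }
  destruct (Hball y) with (eps := eps / 2) as (w2 & (a2 & A2 & N2 & <-) & E2).
  { exact Wy. }
  { rewrite hsub_self, hnorm0. exact r_pos. }
  { lra. }
  exists (hsub a1 a2). split; [apply subspace_sub; assumption|]. split.
  - pose proof (hnorm_sub_le a1 a2). lra.
  - rewrite proj_sub by exact CW.
    replace (hsub (hsub (proj W a1) (proj W a2)) z)
      with (hsub (hsub (proj W a1) (hadd y z)) (hsub (proj W a2) y)) by vec_eq.
    pose proof (hnorm_sub_le (hsub (proj W a1) (hadd y z)) (hsub (proj W a2) y)). lra.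
Qed.

Lemma proj_approx_preimage : exists K, 0 <= K /\ forall z, W z ->
  exists a, A a /\ hnorm a <= K * hnorm z /\ hnorm (hsub (proj W a) z) <= hnorm z / 2.
Proof.
  destruct proj_image_dense_ball as (m & r & m_ge0 & r_pos & Hball).
  exists (2 * m / r). split; [apply Rmult_le_pos; [lra | left; apply Rinv_0_lt_compat, r_pos]|].
  intros z Wz. destruct (classic (z = hzero)) as [->|Nz].
  { exists hzero. split; [apply subspace0, CA|].
    rewrite (proj_id W CW hzero (subspace0 W CW)), hsub_self, hnorm0.
    lra. }
  pose proof (hnorm_gt0 z Nz) as z_pos.
  set (c := r / (2 * hnorm z)).
  assert (c_pos : 0 < c) by (apply Rdiv_lt_0_compat; lra).
  destruct (Hball (hscal c z)) with (eps := r / 4) as (a & Aa & Na & Ea).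
  - apply subspace_scal; assumption.
  - rewrite hnorm_scal, Rabs_right by lra. unfold c. field_simplify; lra.
  - lra.
  - exists (hscal (/ c) a). split; [apply subspace_scal; assumption|].
    rewrite proj_scal by exact CW.
    replace (hsub (hscal (/ c) (proj W a)) z) with (hscal (/ c) (hsub (proj W a) (hscal c z)))
      by (apply inner_ext; intro; inner_simpl; field; lra).
    rewrite !hnorm_scal, Rabs_right by (left; apply Rinv_0_lt_compat; lra).
    unfold c in *. split.
    + apply Rmult_le_reg_r with r; [lra|]. field_simplify; nra.
    + apply Rmult_le_reg_r with r; [lra|]. field_simplify; nra.
Qed.

Lemma proj_preimage_bounded : exists K, 0 <= K /\ forall z, W z ->
  exists a, A a /\ proj W a = z /\ hnorm a <= 2 * K * hnorm z.
Proof.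
  destruct proj_approx_preimage as (K & K_ge0 & approx).
  exists K. split; [exact K_ge0|]. intros z0 Wz0.
  (* Each step corrects [s] by an approximate preimage of the residual, halving it. *)
  set (inv k (p : H * H) := W (fst p) /\ A (snd p) /\ fst p = hsub z0 (proj W (snd p)) /\
         hnorm (fst p) <= hnorm z0 * (/ 2) ^ k).
  set (step (k : nat) (p q : H * H) := hnorm (hsub (snd q) (snd p)) <= K * hnorm (fst p) /\
         hnorm (fst q) <= hnorm (fst p) / 2).
  destruct (dependent_choice (z0, hzero) inv step) as [p [p0 Hp]].
  { unfold inv. simpl. rewrite (proj_id W CW hzero (subspace0 W CW)), hsub0.
    repeat split; [exact Wz0 | apply subspace0, CA | lra]. }
  { intros k [z s] (Wz & As & Ez & Nz). simpl in *.
    destruct (approx z Wz) as (a & Aa & Na & Ea).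
    exists (hsub z (proj W a), hadd s a). unfold step, inv. simpl. repeat split.
    - replace (hsub (hadd s a) s) with a by vec_eq. exact Na.
    - rewrite hnorm_sub_sym. exact Ea.
    - apply subspace_sub; [exact CW | exact Wz | apply proj_in, CW].
    - apply subspace_add; assumption.
    - rewrite proj_add, Ez by exact CW. vec_eq.
    - rewrite hnorm_sub_sym. lra. }
  destruct (converges_of_telescoping (fun k => snd (p k)) (fun k => 2 * K * hnorm (fst (p k))))
    as [s [Hs Hsk]].
  - intro k. destruct (Hp k) as [_ [Hk1 Hk2]]. nra.
  - intro k. pose proof (hnorm_ge0 (fst (p k))). nra.
  - intros eps Heps. destruct (pow_half_vanishes (2 * K * hnorm z0) eps Heps) as [k Hk].
    exists k. destruct (Hp k) as [(_ & _ & _ & Nk) _]. nra.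
  - assert (As : A s).
    { apply (subspace_limit A CA (fun k => snd (p k)) s); [intro k; apply Hp | exact Hs]. }
    exists s. split; [exact As | split].
    + apply hsub_eq0, hnorm_eq0, Rle_antisym; [|apply hnorm_ge0].
      apply Rle_plus_epsilon. intros eps Heps.
      destruct (pow_half_vanishes ((2 * K + 1) * hnorm z0) eps Heps) as [k Hk].
      destruct (Hp k) as [(_ & _ & Ek & Nk) _].
      replace (hsub (proj W s) z0) with (hsub (proj W (hsub s (snd (p k)))) (fst (p k)))
        by (rewrite Ek, proj_sub by exact CW; vec_eq).
      pose proof (hnorm_sub_le (proj W (hsub s (snd (p k)))) (fst (p k))).
      pose proof (proj_hnorm_le W CW (hsub s (snd (p k)))). pose proof (Hsk k). nra.
    + pose proof (Hsk 0%nat) as N0. simpl in N0. rewrite p0, hsub0 in N0. simpl in N0. exact N0.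
Qed.

Lemma proj_bounded_below : exists k, 0 < k /\ forall a, A a -> k * hnorm a <= hnorm (proj W a).
Proof.
  destruct proj_preimage_bounded as (K & K_ge0 & preimage).
  exists (/ (2 * K + 1)). split; [apply Rinv_0_lt_compat; lra|].
  intros a Aa. destruct (preimage (proj W a) (proj_in W CW a)) as (b & Ab & Eb & Nb).
  assert (b = a) as ->.
  { apply hsub_eq0, proj_eq0_on; [apply subspace_sub; assumption|].
    rewrite proj_sub, Eb, hsub_self by exact CW. reflexivity. }
  apply Rmult_le_reg_l with (2 * K + 1); [lra|].
  rewrite <- Rmult_assoc, Rinv_r, Rmult_1_l by lra.
  pose proof (hnorm_ge0 (proj W a)). pose proof (hnorm_ge0 a). nra.
Qed.
End ObliqueProjection.

Definition ratio_set (V1 V2 : H -> Prop) (r : R) : Prop :=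
  exists x, V1 x /\ x <> hzero /\ r = hnorm (proj V2 x) / hnorm x.

Lemma proj_ratio_bounds V x : closed_subspace V -> x <> hzero ->
  0 <= hnorm (proj V x) / hnorm x <= 1.
Proof.
  intros CV Nx. pose proof (hnorm_gt0 x Nx). pose proof (proj_hnorm_le V CV x).
  pose proof (hnorm_ge0 (proj V x)). split.
  - unfold Rdiv. apply Rmult_le_pos; [lra | left; apply Rinv_0_lt_compat; lra].
  - apply Rmult_le_reg_r with (hnorm x); [lra|]. unfold Rdiv. rewrite Rmult_assoc, Rinv_l; lra.
Qed.

Lemma cos_ang_glb V1 V2 : closed_subspace V2 -> nonzero_sub V1 ->
  is_glb (ratio_set V1 V2) (cos_ang V1 V2).
Proof.
  intros CV2 [x [V1x Nx]]. apply Rinf_glb.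
  - exists (hnorm (proj V2 x) / hnorm x), x. auto.
  - exists 0. intros r (y & _ & Ny & ->). apply proj_ratio_bounds; assumption.
Qed.

Lemma cos_ang_ge0 (V1 V2 : H -> Prop) : closed_subspace V2 -> nonzero_sub V1 -> 0 <= cos_ang V1 V2.
Proof.
  intros CV2 nV1. apply (cos_ang_glb V1 V2 CV2 nV1).
  intros r (y & _ & Ny & ->). apply proj_ratio_bounds; assumption.
Qed.

Lemma sin_ang_lub V1 V2 : nonzero_sub V1 -> is_lub (ratio_set V1 (perp V2)) (sin_ang V1 V2).
Proof.
  intros [x [V1x Nx]]. apply Rsup_lub.
  - exists (hnorm (proj (perp V2) x) / hnorm x), x. auto.
  - exists 1. intros r (y & _ & Ny & ->).
    apply proj_ratio_bounds; [apply perp_closed_subspace | exact Ny].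
Qed.

Section RangeAngles.
Variables S A : H -> Prop.
Hypothesis CS : closed_subspace S.
Hypothesis CA : closed_subspace A.
Hypothesis DS : direct_sum_full A (perp S).

Definition perp_scale (lam : R) (a : H) : H := hadd (proj S a) (hscal lam (hsub a (proj S a))).

Definition blend (lam : R) (x : H) : H :=
  hadd (hscal lam (oproj A (perp S) x)) (hscal (1 - lam) (proj S x)).

Lemma proj_perp_scale lam a : proj S (perp_scale lam a) = proj S a.
Proof.
  apply proj_unique; [exact CS | apply proj_in, CS |].
  replace (hsub (perp_scale lam a) (proj S a)) with (hscal lam (hsub a (proj S a)))
    by (unfold perp_scale; vec_eq).
  apply subspace_scal; [apply perp_closed_subspace | apply proj_perp, CS].
Qed.

Lemma perp_scale1 a : perp_scale 1 a = a.
Proof. unfold perp_scale. vec_eq. Qed.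

Lemma blend_perp_scale lam x : blend lam x = perp_scale lam (oproj A (perp S) x).
Proof. unfold blend, perp_scale. rewrite (proj_oproj A S CS DS). vec_eq. Qed.

Lemma proj_neq0 a : A a -> a <> hzero -> proj S a <> hzero.
Proof. intros Aa Na E. exact (Na (proj_eq0_on A S CS DS a Aa E)). Qed.

Lemma proj_perp_scale_neq0 lam a : A a -> a <> hzero -> proj S (perp_scale lam a) <> hzero.
Proof. rewrite proj_perp_scale. apply proj_neq0. Qed.

Lemma perp_scale_neq0 lam a : A a -> a <> hzero -> perp_scale lam a <> hzero.
Proof.
  intros Aa Na E. apply (proj_perp_scale_neq0 lam a Aa Na). rewrite E.
  apply (proj_id S CS hzero (subspace0 S CS)).
Qed.

Lemma ratio_set_range_blend lam r :
  ratio_set (range (blend lam)) S r <->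
  exists a, A a /\ a <> hzero /\ r = hnorm (proj S (perp_scale lam a)) / hnorm (perp_scale lam a).
Proof.
  split.
  - intros (y & [x ->] & Ny & ->). rewrite blend_perp_scale in *.
    exists (oproj A (perp S) x). split; [apply (oproj_spec A S DS) | split; [|reflexivity]].
    intro E. apply Ny. rewrite E. unfold perp_scale.
    rewrite (proj_id S CS hzero (subspace0 S CS)). vec_eq.
  - intros (a & Aa & Na & ->). exists (perp_scale lam a). split; [|split; [|reflexivity]].
    + exists a. rewrite blend_perp_scale, (oproj_id A S CA DS a Aa). reflexivity.
    + apply perp_scale_neq0; assumption.
Qed.

Lemma perp_scale_ratio_sqr lam a : A a -> a <> hzero ->
  (hnorm (proj S (perp_scale lam a)) / hnorm (perp_scale lam a)) ^ 2 =
  1 / (1 + lam ^ 2 * (hnorm (hsub a (proj S a)) / hnorm (proj S a)) ^ 2).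
Proof.
  intros Aa Na. pose proof (proj_perp_scale_neq0 lam a Aa Na) as Np.
  pose proof (perp_scale_neq0 lam a Aa Na) as Nb.
  rewrite proj_perp_scale in *.
  assert (Hb : hinner (perp_scale lam a) (perp_scale lam a) =
               hinner (proj S a) (proj S a) +
               lam ^ 2 * hinner (hsub a (proj S a)) (hsub a (proj S a))).
  { pose proof (proj_perp S CS a (proj S a) (proj_in S CS a)) as O.
    unfold perp_scale. set (p := proj S a) in *. set (q := hsub a p) in *.
    inner_simpl. rewrite (inner_sym p q), O. ring. }
  rewrite <- !hnorm_sqr in Hb.
  pose proof (hnorm_gt0 _ Np). pose proof (hnorm_gt0 _ Nb).
  pose proof (pow2_ge_0 (lam * hnorm (hsub a (proj S a)))).
  field_simplify_eq; [nra | repeat split; nra].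
Qed.

Lemma cos_range_blend_glb lam : nonzero_sub A ->
  is_glb (ratio_set (range (blend lam)) S) (cos_ang (range (blend lam)) S).
Proof.
  intros [a [Aa Na]]. apply cos_ang_glb; [exact CS|].
  destruct (proj2 (ratio_set_range_blend lam _) (ex_intro _ a (conj Aa (conj Na eq_refl))))
    as (y & By & Ny & _).
  exists y. auto.
Qed.

Lemma tangent_eq_ratio_div a : A a -> a <> hzero ->
  hnorm (hsub a (proj S a)) / hnorm (proj S a) =
  (hnorm (proj (perp S) a) / hnorm a) / (hnorm (proj S a) / hnorm a).
Proof.
  intros Aa Na. rewrite (proj_perp_eq S CS).
  pose proof (hnorm_gt0 a Na). pose proof (hnorm_gt0 _ (proj_neq0 a Aa Na)). field. lra.
Qed.

Lemma cos_proj_pos : nonzero_sub A -> 0 < cos_ang A S.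
Proof.
  intro nA. destruct (proj_bounded_below A S CA CS DS) as (k & k_pos & Hk).
  apply Rlt_le_trans with k; [exact k_pos|]. apply (cos_ang_glb A S CS nA).
  intros r (a & Aa & Na & ->). pose proof (hnorm_gt0 a Na).
  apply Rmult_le_reg_r with (hnorm a); [lra|].
  unfold Rdiv. rewrite Rmult_assoc, Rinv_l, Rmult_1_r by lra. apply Hk, Aa.
Qed.

Lemma cos_range_blend_sqr_ge lam : nonzero_sub A ->
  1 / (1 + lam ^ 2 * (sin_ang A S ^ 2 / cos_ang A S ^ 2)) <= cos_ang (range (blend lam)) S ^ 2.
Proof.
  intro nA. pose proof (cos_proj_pos nA) as c_pos.
  replace (sin_ang A S ^ 2 / cos_ang A S ^ 2) with ((sin_ang A S / cos_ang A S) ^ 2)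
    by (field; lra).
  set (L := 1 / (1 + lam ^ 2 * (sin_ang A S / cos_ang A S) ^ 2)).
  assert (L_ge0 : 0 <= L).
  { unfold L. pose proof (pow2_ge_0 (lam * (sin_ang A S / cos_ang A S))).
    unfold Rdiv at 1. rewrite Rmult_1_l. left. apply Rinv_0_lt_compat. nra. }
  assert (HL : sqrt L <= cos_ang (range (blend lam)) S).
  { apply (cos_range_blend_glb lam nA). intros r Hr.
    apply ratio_set_range_blend in Hr as (a & Aa & Na & ->).
    apply sqrt_le_of_le_sqr.
    { apply proj_ratio_bounds; [exact CS | apply perp_scale_neq0; assumption]. }
    rewrite perp_scale_ratio_sqr by assumption. apply inv_one_plus_sqr_antitone. split.
    - unfold Rdiv. apply Rmult_le_pos; [apply hnorm_ge0|].
      left. apply Rinv_0_lt_compat, hnorm_gt0, proj_neq0; assumption.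
    - rewrite tangent_eq_ratio_div by assumption. apply div_le_div_of_bounds.
      + split; [exact c_pos|]. apply (cos_ang_glb A S CS nA). exists a. auto.
      + split; [apply proj_ratio_bounds; [apply perp_closed_subspace | exact Na]|].
        apply (sin_ang_lub A S nA). exists a. auto. }
  pose proof (sqrt_pos L). pose proof (sqrt_sqrt L L_ge0). nra.
Qed.

Lemma cos_range_blend_sqr_le lam : nonzero_sub A ->
  cos_ang (range (blend lam)) S ^ 2 <=
  1 / (1 + lam ^ 2 * (cos_ang A (perp S) ^ 2 / sin_ang A (perp S) ^ 2)).
Proof.
  intro nA. pose proof nA as [a [Aa Na]].
  pose proof (cos_range_blend_glb lam nA) as Gb.
  pose proof (cos_ang_glb A (perp S) (perp_closed_subspace S) nA) as Gc.
  pose proof (sin_ang_lub A (perp S) nA) as Gs.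
  set (u := hnorm (proj S a) / hnorm a).
  assert (u_pos : 0 < u).
  { unfold u, Rdiv. apply Rmult_lt_0_compat; [apply hnorm_gt0, proj_neq0; assumption|].
    apply Rinv_0_lt_compat, hnorm_gt0, Na. }
  assert (u_le : u <= sin_ang A (perp S)).
  { apply Gs. exists a. rewrite (proj_perp_perp S CS). auto. }
  replace (cos_ang A (perp S) ^ 2 / sin_ang A (perp S) ^ 2)
    with ((cos_ang A (perp S) / sin_ang A (perp S)) ^ 2) by (field; lra).
  set (e := hnorm (proj S (perp_scale lam a)) / hnorm (perp_scale lam a)).
  assert (Hb : 0 <= cos_ang (range (blend lam)) S <= e).
  { split.
    - apply Gb. intros r (y & _ & Ny & ->). apply proj_ratio_bounds; assumption.
    - apply Gb, ratio_set_range_blend. exists a. auto. }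
  apply Rle_trans with (e ^ 2); [nra|].
  unfold e. rewrite perp_scale_ratio_sqr by assumption. apply inv_one_plus_sqr_antitone. split.
  - apply Rmult_le_pos; [apply cos_ang_ge0; [apply perp_closed_subspace | exact nA]|].
    left. apply Rinv_0_lt_compat. lra.
  - rewrite tangent_eq_ratio_div by assumption. apply div_le_div_of_bounds; [split; assumption|].
    split; [apply cos_ang_ge0; [apply perp_closed_subspace | exact nA]|].
    apply Gc. exists a. auto.
Qed.

Lemma cos_range_blend_ge lam : nonzero_sub A -> lam ^ 2 <= 1 ->
  cos_ang A S <= cos_ang (range (blend lam)) S.
Proof.
  intros nA lam_le. apply (cos_range_blend_glb lam nA). intros r Hr.
  apply ratio_set_range_blend in Hr as (a & Aa & Na & ->).
  apply Rle_trans with (hnorm (proj S a) / hnorm a).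
  { apply (cos_ang_glb A S CS nA). exists a. auto. }
  apply Rle_of_sqr_le; [apply proj_ratio_bounds; [exact CS | apply perp_scale_neq0; assumption]|].
  pose proof (perp_scale_ratio_sqr 1 a Aa Na) as E1. rewrite perp_scale1 in E1.
  pose proof (perp_scale_ratio_sqr lam a Aa Na) as E2.
  set (t := hnorm (hsub a (proj S a)) / hnorm (proj S a)) in *.
  enough ((hnorm (proj S a) / hnorm a) ^ 2 <=
          (hnorm (proj S (perp_scale lam a)) / hnorm (perp_scale lam a)) ^ 2) by nra.
  rewrite E1, E2. pose proof (pow2_ge_0 t).
  unfold Rdiv. rewrite !Rmult_1_l. apply Rinv_le_contravar; nra.
Qed.
End RangeAngles.
End Hilbert.

Theorem mainTheorem6 (H : Hilbert) (S A : H -> Prop) (lam : R) :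
  closed_subspace S -> closed_subspace A ->
  nonzero_sub S -> nonzero_sub A -> nonzero_sub (perp S) -> nonzero_sub (perp A) ->
  direct_sum_full A (perp S) ->
  0 <= lam <= 1 ->
  let B := fun x : H => hadd (hscal lam (oproj A (perp S) x)) (hscal (1 - lam) (proj S x)) in
  let BB := range B in
  1 / (1 + lam ^ 2 * ((sin_ang A S) ^ 2 / (cos_ang A S) ^ 2)) <= (cos_ang BB S) ^ 2 /\
  (cos_ang BB S) ^ 2 <= 1 / (1 + lam ^ 2 * ((cos_ang A (perp S)) ^ 2 / (sin_ang A (perp S)) ^ 2)) /\
  cos_ang BB S >= cos_ang A S.
Proof.
  intros CS CA _ nA _ _ DS lam_range B BB.
  split; [|split].
  - exact (cos_range_blend_sqr_ge S A CS CA DS lam nA).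
  - exact (cos_range_blend_sqr_le S A CS CA DS lam nA).
  - apply Rle_ge, (cos_range_blend_ge S A CS CA DS lam nA). nra.
Qed.
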